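(* For every integral domain $D$ and semistar operation $\star$ on $D$, $$\widetilde{\star}\text{-}\dim_v(D)=\sup\{\dim(T)\mid T\text{ is a }(\star,d_T)\text{-linked overring of }D\}.$$
   Context: $D$ is an integral domain with quotient field $K$; $f(D)$ denotes nonzero finitely generated fractional ideals, $\overline{\mathcal F}(D)$ nonzero $D$-submodules of $K$. A semistar operation $\star$ on $D$ is a map $\overline{\mathcal F}(D)\to\overline{\mathcal F}(D)$ with $(xE)^\star=xE^\star$ ($0\neq x\in K$), $E\subseteq F\Rightarrow E^\star\subseteq F^\star$, $E\subseteq E^\star=(E^\star)^\star$. $E^{\star_f}:=\bigcup\{F^\star:F\in f(D),F\subseteq E\}$. A nonzero ideal $I$ is a quasi-$\star_f$-ideal if $I^{\star_f}\cap D=I$; $\operatorname{QMax}^{\star_f}(D)$ is the set of maximal proper quasi-$\star_f$-ideals. $E^{\widetilde\star}:=\bigcap\{ED_M:M\in\operatorname{QMax}^{\star_f}(D)\}$ ($=K$ if empty). A valuation overring $V$ of $D$ is a $\widetilde\star$-valuation overring if $F^{\widetilde\star}\subseteq FV$ for all $F\in f(D)$; $\widetilde\star$-$\dim_v(D):=\sup\{\dim V\}$ over $\widetilde\star$-valuation overrings. An overring $T$ of $D$ ($D\subseteq T\subseteq K$) is $(\star,d_T)$-linked to $D$ if for every nonzero finitely generated ideal $F$ of $D$ with $F^\star=D^\star$ one has $FT=T$. *)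

From HB Require Import structures.
From mathcomp Require Import all_boot all_order all_algebra.
Set Implicit Arguments. Unset Strict Implicit. Unset Printing Implicit Defensive.
Import Order.TTheory GRing.Theory Num.Theory.
Local Open Scope ring_scope.

Section Defs.
Variable K : fieldType.

Definition kset := K -> Prop.
Definition ksubset (A B : kset) := forall x, A x -> B x.
Definition kseteq (A B : kset) := forall x, A x <-> B x.
Definition kstrict_subset (A B : kset) := ksubset A B /\ exists x, B x /\ ~ A x.

Definition is_subring (D : kset) :=
  D 0 /\ D 1 /\ (forall x y, D x -> D y -> D (x - y)) /\
  (forall x y, D x -> D y -> D (x * y)).

Definition quotient_field_of (D : kset) :=
  forall x : K, exists a b, D a /\ D b /\ b != 0 /\ x = a / b.

Definition domain_with_qf (D : kset) := is_subring D /\ quotient_field_of D.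

Definition is_submodule (D E : kset) :=
  E 0 /\ (forall x y, E x -> E y -> E (x + y)) /\
  (forall d x, D d -> E x -> E (d * x)).
Definition knonzero (E : kset) := exists x, E x /\ x != 0.
Definition Fbar (D E : kset) := is_submodule D E /\ knonzero E.

Definition kscale (x : K) (E : kset) : kset := fun y => exists e, E e /\ y = x * e.

Fixpoint span (R : kset) (s : seq K) : kset :=
  match s with
  | [::] => fun y => y = 0
  | x :: s' => fun y => exists r z, R r /\ span R s' z /\ y = r * x + z
  end.

Definition fg_frac (D F : kset) := (exists s, kseteq F (span D s)) /\ knonzero F.

Definition semistar (D : kset) (star : kset -> kset) :=
  (forall E, Fbar D E -> Fbar D (star E)) /\
  (forall x E, x != 0 -> Fbar D E -> kseteq (star (kscale x E)) (kscale x (star E))) /\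
  (forall E F, Fbar D E -> Fbar D F -> ksubset E F -> ksubset (star E) (star F)) /\
  (forall E, Fbar D E -> ksubset E (star E)) /\
  (forall E, Fbar D E -> kseteq (star (star E)) (star E)).

Definition star_f (D : kset) (star : kset -> kset) (E : kset) : kset :=
  fun y => exists F, fg_frac D F /\ ksubset F E /\ star F y.

Definition nz_ideal (D I : kset) := Fbar D I /\ ksubset I D.
Definition quasi_ideal (D : kset) star (I : kset) :=
  nz_ideal D I /\ kseteq (fun x => star_f D star I x /\ D x) I.
Definition proper_in (D I : kset) := exists d, D d /\ ~ I d.

Definition QMax (D : kset) star (M : kset) :=
  quasi_ideal D star M /\ proper_in D M /\
  forall N, quasi_ideal D star N -> proper_in D N -> ksubset M N -> ksubset N M.

Definition localization (D M : kset) : kset :=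
  fun x => exists d s, D d /\ D s /\ ~ M s /\ x = d / s.

Definition ext (E T : kset) : kset :=
  fun x => exists l : seq (K * K),
    (forall p, p \in l -> E p.1 /\ T p.2) /\ x = \sum_(p <- l) p.1 * p.2.

Definition star_tilde (D : kset) star (E : kset) : kset :=
  fun x => forall M, QMax D star M -> ext E (localization D M) x.

Definition overring (D T : kset) := is_subring T /\ ksubset D T.
Definition valuation_overring (D V : kset) :=
  overring D V /\ forall x, x != 0 -> V x \/ V x^-1.
Definition tilde_valuation_overring (D : kset) star (V : kset) :=
  valuation_overring D V /\
  forall F, fg_frac D F -> ksubset (star_tilde D star F) (ext F V).

Definition linked (D : kset) star (T : kset) :=
  overring D T /\
  forall F, fg_frac D F -> ksubset F D -> kseteq (star F) (star D) ->
    kseteq (ext F T) T.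

Definition prime_ideal (T P : kset) :=
  ksubset P T /\ P 0 /\ (forall x y, P x -> P y -> P (x + y)) /\
  (forall t x, T t -> P x -> P (t * x)) /\ ~ P 1 /\
  (forall x y, T x -> T y -> P (x * y) -> P x \/ P y).

Definition dim_ge (T : kset) (n : nat) :=
  exists c : nat -> kset,
    (forall i, (i <= n)%N -> prime_ideal T (c i)) /\
    (forall i, (i < n)%N -> kstrict_subset (c i) (c i.+1)).

Definition tilde_dim_v_ge (D : kset) star (n : nat) :=
  exists V, tilde_valuation_overring D star V /\ dim_ge V n.

Definition linked_dim_sup_ge (D : kset) star (n : nat) :=
  exists T, linked D star T /\ dim_ge T n.

End Defs.

(* - Every tilde-star-valuation overring V is linked (tilde_linked): for f.g.
     F <= D with F^star = D^star one has 1 in F^{tilde star} <= FV, so FV = V.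
   - Conversely, let T be linked with a chain of primes P_0 < ... < P_n.
     Chevalley's extension theorem (chevalley), refined along the chain
     (valuation_refine, valuation_chain), yields valuation rings
     V_n <= ... <= V_0 containing T with V_i centered on P_i; their maximal
     ideals form a chain of length n in V_n (valuation_dim_ge).  A valuation
     ring V containing a linked overring is a tilde-star-valuation overring
     (valuation_over_linked): the center of V on D avoids 1 under star_f, hence
     lies in some M in QMax^{star_f}(D) (qmax_exists), and D_M <= V. *)

From Pilot Require Import Defs.
From HB Require Import structures.
From mathcomp Require Import all_boot all_order all_algebra.
From mathcomp Require Import boolp.
From mathcomp Require classical_sets.
Set Implicit Arguments. Unset Strict Implicit. Unset Printing Implicit Defensive.
Import Order.TTheory GRing.Theory Num.Theory.
Local Open Scope ring_scope.

Lemma zorn_in (X : Type) (P : X -> Prop) (le : X -> X -> Prop) :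
  (forall x, le x x) -> (forall x y z, le x y -> le y z -> le x z) ->
  (forall C : X -> Prop, (forall x, C x -> P x) ->
     (forall x y, C x -> C y -> le x y \/ le y x) ->
     exists2 u, P u & forall x, C x -> le x u) ->
  exists2 m, P m & forall y, P y -> le m y -> le y m.
Proof.
move=> le_refl le_trans chain_ub.
have [u0 Pu0 _] := chain_ub (fun _ => False) (fun _ => False_ind _) (fun _ _ => False_ind _).
pose R (x y : {x | P x}) := `[< le (sval x) (sval y) >].
have [||A totA|[m Pm] maxm] := @classical_sets.ZL_preorder _ (exist _ u0 Pu0) R.
- by move=> x; apply/asboolP.
- by move=> x y z /asboolP xy /asboolP yz; apply/asboolP; apply: le_trans xy yz.
- pose C x := exists h : P x, A (exist _ x h).
  have [u Pu ub] : exists2 u, P u & forall x, C x -> le x u.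
    apply: chain_ub => [x [] //|x y [hx Ax] [hy Ay]].
    by case: (totA _ _ Ax Ay) => /asboolP; [left|right].
  by exists (exist _ u Pu) => -[x hx] Ax; apply/asboolP/ub; exists hx.
- by exists m => // y Py /asboolP my; apply/asboolP/(maxm (exist _ y Py)).
Qed.

Definition ideal (K : fieldType) (R I : kset K) :=
  ksubset I R /\ I 0 /\ (forall x y, I x -> I y -> I (x + y)) /\
  (forall r x, R r -> I x -> I (r * x)).

Section SubringsAndIdeals.
Variable K : fieldType.
Implicit Types (D R I E : kset K).

Lemma subring0 R : is_subring R -> R 0. Proof. by case. Qed.
Lemma subring1 R : is_subring R -> R 1. Proof. by case=> _ []. Qed.
Lemma subringB R x y : is_subring R -> R x -> R y -> R (x - y).
Proof. by case=> _ [_ [h _]]; apply: h. Qed.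
Lemma subringM R x y : is_subring R -> R x -> R y -> R (x * y).
Proof. by case=> _ [_ [_ h]]; apply: h. Qed.
Lemma subringN R x : is_subring R -> R x -> R (- x).
Proof. by move=> hR hx; rewrite -sub0r; apply: subringB => //; apply: subring0. Qed.
Lemma subringD R x y : is_subring R -> R x -> R y -> R (x + y).
Proof. by move=> hR hx hy; rewrite -[y]opprK; apply: subringB => //; apply: subringN. Qed.

Lemma closed_sum E (J : eqType) (s : seq J) (f : J -> K) :
  E 0 -> (forall x y, E x -> E y -> E (x + y)) ->
  (forall i, i \in s -> E (f i)) -> E (\sum_(i <- s) f i).
Proof.
move=> E0 ED; elim: s => [|a s IH] Hs; first by rewrite big_nil.
rewrite big_cons; apply: ED; first by apply: Hs; rewrite mem_head.
by apply: IH => i hi; apply: Hs; rewrite inE hi orbT.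
Qed.

Lemma subring_sum R (J : eqType) (s : seq J) (f : J -> K) : is_subring R ->
  (forall i, i \in s -> R (f i)) -> R (\sum_(i <- s) f i).
Proof. by move=> hR; apply: closed_sum; [apply: subring0|move=> x y; apply: (subringD hR)]. Qed.

Lemma ideal_sub R I x : ideal R I -> I x -> R x. Proof. by case=> h _; apply: h. Qed.
Lemma ideal0 R I : ideal R I -> I 0. Proof. by case=> _ []. Qed.
Lemma idealD R I x y : ideal R I -> I x -> I y -> I (x + y).
Proof. by case=> _ [_ [h _]]; apply: h. Qed.
Lemma idealM R I r x : ideal R I -> R r -> I x -> I (r * x).
Proof. by case=> _ [_ [_ h]]; apply: h. Qed.
Lemma idealMr R I r x : ideal R I -> R r -> I x -> I (x * r).
Proof. by move=> hI hr hx; rewrite mulrC; apply: idealM hI hr hx. Qed.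
Lemma idealN R I x : is_subring R -> ideal R I -> I x -> I (- x).
Proof.
by move=> hR hI hx; rewrite -mulN1r; apply: idealM hI _ hx; apply: subringN hR (subring1 hR).
Qed.
Lemma idealB R I x y : is_subring R -> ideal R I -> I x -> I y -> I (x - y).
Proof. by move=> hR hI hx hy; apply: (idealD hI hx); apply: idealN hR hI hy. Qed.
Lemma ideal_sum R I (J : eqType) (s : seq J) (f : J -> K) : ideal R I ->
  (forall i, i \in s -> I (f i)) -> I (\sum_(i <- s) f i).
Proof. by move=> hI; apply: closed_sum; [apply: ideal0 hI|move=> x y; apply: (idealD hI)]. Qed.

Lemma ideal_unit R I x : ideal R I -> ~ I 1 -> x != 0 -> R x^-1 -> ~ I x.
Proof. by move=> hI I1 x0 Rx Ix; apply: I1; rewrite -(mulVf x0); apply: idealM hI Rx Ix. Qed.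

Definition add_principal R I x : kset K := fun z => exists b c, R b /\ I c /\ z = c + x * b.

Lemma add_principal_ideal R I x : is_subring R -> ideal R I -> R x -> ideal R (add_principal R I x).
Proof.
move=> hR hI Rx.
split.
  by move=> _ [b [c [Rb [Ic ->]]]]; apply: subringD (ideal_sub hI Ic) _ => //; apply: subringM.
split; first by exists 0, 0; do !split; [exact: subring0|exact: ideal0 hI|rewrite mulr0 addr0].
split=> [_ _ [b [c [Rb [Ic ->]]]] [b' [c' [Rb' [Ic' ->]]]]|r _ Rr [b [c [Rb [Ic ->]]]]].
- exists (b + b'), (c + c'); do !split; [exact: subringD|exact: (idealD hI)|].
  by rewrite mulrDr addrACA.
- exists (r * b), (r * c); do !split; [exact: subringM|exact: (idealM hI)|].
  by rewrite mulrDr mulrCA.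
Qed.

Lemma add_principal_sub R I x : is_subring R -> ksubset I (add_principal R I x).
Proof. by move=> hR c Ic; exists 0, c; do !split => //; [exact: subring0|rewrite mulr0 addr0]. Qed.

Lemma add_principal_gen R I x : is_subring R -> ideal R I -> add_principal R I x x.
Proof.
by move=> hR hI; exists 1, 0; do !split; [exact: subring1|exact: ideal0 hI|rewrite mulr1 add0r].
Qed.

Lemma ideal_submodule D N : ideal D N -> is_submodule D N.
Proof. by case=> _ [N0 [Nadd Nmul]]. Qed.

Lemma prime_ideal_ideal R P : prime_ideal R P -> ideal R P.
Proof. by case=> h1 [h2 [h3 [h4 _]]]. Qed.

Lemma Fbar_self D : is_subring D -> Fbar D D.
Proof.
move=> hD; split; last by exists 1; split; [apply: subring1|apply: oner_neq0].
by split; [apply: subring0|split=> [x y|d x]; [apply: subringD|apply: subringM]].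
Qed.
End SubringsAndIdeals.

Section ProductModules.
Variable K : fieldType.
Implicit Types (E T V I : kset K).

Lemma ext_single E T e t : E e -> T t -> ext E T (e * t).
Proof.
move=> he ht; exists [:: (e, t)]; split; last by rewrite big_seq1.
by move=> p; rewrite inE => /eqP ->.
Qed.

Lemma ext_monor E T T' : ksubset T T' -> ksubset (ext E T) (ext E T').
Proof.
move=> sTT' x [l [hl ->]]; exists l; split => // p /hl [h1 h2].
by split => //; apply: sTT'.
Qed.

Lemma ext_mulr E T x v : (forall t, T t -> T (t * v)) -> ext E T x -> ext E T (x * v).
Proof.
move=> Tv [l [hl ->]]; exists [seq (p.1, p.2 * v) | p <- l]; split.
- by move=> p /mapP [q /hl [h1 h2] ->]; split => //; apply: Tv.
- by rewrite big_map mulr_suml; apply: eq_bigr => p _; rewrite mulrA.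
Qed.

Lemma ext_ideal E T V I : ideal V I -> ksubset E I -> ksubset T V -> ksubset (ext E T) I.
Proof.
move=> hI sEI sTV x [l [hl ->]]; apply: (ideal_sum hI) => p /hl [h1 h2].
by apply: (idealMr hI); [apply: sTV|apply: sEI].
Qed.

Lemma ext_subring E T V : is_subring V -> ksubset E V -> ksubset T V -> ksubset (ext E T) V.
Proof.
move=> hV sEV sTV x [l [hl ->]]; apply: subring_sum => // p /hl [h1 h2].
by apply: subringM; [|apply: sEV|apply: sTV].
Qed.
End ProductModules.

Definition vring (K : fieldType) (V : kset K) :=
  is_subring V /\ forall x, x != 0 -> V x \/ V x^-1.
Definition max_ideal (K : fieldType) (V : kset K) : kset K :=
  fun x => V x /\ (x != 0 -> ~ V x^-1).

Section ValuationRings.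
Variable K : fieldType.
Implicit Types (V W : kset K).

Lemma max_ideal1 V : is_subring V -> ~ max_ideal V 1.
Proof. by move=> hV [_ /(_ (oner_neq0 _))]; rewrite invr1; apply; apply: subring1. Qed.

Lemma vring_unit V x : V x -> ~ max_ideal V x -> x != 0 /\ V x^-1.
Proof.
move=> Vx nmx; split; first by apply/eqP => x0; apply: nmx; split => // /eqP.
by apply: contrapT => nV; apply: nmx.
Qed.

Lemma vring_out V x : vring V -> ~ V x -> max_ideal V x^-1.
Proof.
move=> [hV hv] nVx; have x0 : x != 0 by apply/eqP => x0; apply: nVx; rewrite x0; apply: subring0.
by case: (hv x x0) => // Vi; split => // _; rewrite invrK.
Qed.

Lemma max_ideal_ideal V : vring V -> ideal V (max_ideal V).
Proof.
move=> [hV hv]; split; first by move=> x [].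
split; first by split; [apply: subring0|move/eqP].
split=> [x y [Vx hx] [Vy hy]|r x Vr [Vx hx]].
- split; first exact: subringD.
  have [->|x0] := eqVneq x 0; first by rewrite add0r.
  have [->|y0] := eqVneq y 0; first by rewrite addr0.
  move=> xy0 Vi.
  (* (x + y)^-1 (1 + x/y) = y^-1 and symmetrically, and x/y or y/x lies in V *)
  have V1 := subring1 hV.
  case: (hv (x / y)); first by rewrite mulf_neq0 // invr_eq0.
  + move=> Vxy; apply: (hy y0); have -> : y^-1 = (x / y + 1) * (x + y)^-1.
      by rewrite -[1](mulfV y0) -mulrDl mulrAC divff // div1r.
    by apply: subringM => //; apply: subringD.
  + rewrite invf_div => Vyx; apply: (hx x0); have -> : x^-1 = (y / x + 1) * (x + y)^-1.
      by rewrite -[1](mulfV x0) -mulrDl addrC mulrAC divff // div1r.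
    by apply: subringM => //; apply: subringD.
- split; first exact: subringM.
  move=> rx0 Vi; have r0 : r != 0 by apply: contraNneq rx0 => ->; rewrite mul0r.
  have x0 : x != 0 by apply: contraNneq rx0 => ->; rewrite mulr0.
  apply: (hx x0); have -> : x^-1 = r * (r * x)^-1 by rewrite invfM mulVKf.
  exact: subringM.
Qed.

Lemma max_ideal_anti V W : vring V -> ksubset V W -> ksubset (max_ideal W) (max_ideal V).
Proof.
move=> [hV hv] sVW x [Wx hx]; suff Vx : V x by split => // x0 /sVW; apply: hx.
apply: contrapT => nVx.
have x0 : x != 0 by apply/eqP => x0; apply: nVx; rewrite x0; apply: subring0.
by case: (hv x x0) => // /sVW; apply: hx.
Qed.

Lemma max_ideal_prime V W : vring V -> vring W -> ksubset V W -> prime_ideal V (max_ideal W).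
Proof.
move=> hV hW sVW; have hI := max_ideal_ideal hW.
split; first by move=> x /(max_ideal_anti hV sVW) [].
split; first exact: ideal0 hI.
split; first by move=> x y; apply: idealD hI.
split; first by move=> t x /sVW; apply: idealM hI.
split; first exact: max_ideal1 (proj1 hW).
move=> x y Vx Vy [_ nxy]; apply: contrapT => /not_orP [nx ny].
have [x0 Wx'] := vring_unit (sVW _ Vx) nx; have [y0 Wy'] := vring_unit (sVW _ Vy) ny.
by apply: nxy; [rewrite mulf_neq0|rewrite invfM; apply: subringM (proj1 hW) Wx' Wy'].
Qed.
End ValuationRings.

Section Localization.
Variables (K : fieldType) (R M : kset K).
Hypotheses (hR : is_subring R) (M0 : M 0) (M1 : ~ M 1)
  (Mmul : forall s s', R s -> R s' -> ~ M s -> ~ M s' -> ~ M (s * s')).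

Definition loc_ideal (I : kset K) : kset K :=
  fun x => exists c s, I c /\ R s /\ ~ M s /\ x = c / s.

Let nzM s : ~ M s -> s != 0.
Proof. by move=> Ms; apply/eqP => s0; apply: Ms; rewrite s0. Qed.

Lemma localization_subring : is_subring (localization R M).
Proof.
have R1 := subring1 hR.
split; first by exists 0, 1; do !split => //; [apply: subring0|rewrite mul0r].
split; first by exists 1, 1; do !split => //; rewrite divr1.
split=> x y [a [s [Ra [Rs [Ms ->]]]]] [b [t [Rb [Rt [Mt ->]]]]].
- exists (a * t - b * s), (s * t); do !split; [|exact: subringM|exact: Mmul|].
  + by apply: subringB => //; apply: subringM.
  + by rewrite -mulNr addf_div ?nzM // mulNr.
- exists (a * b), (s * t); do !split; [exact: subringM|exact: subringM|exact: Mmul|].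
  exact: mulf_div.
Qed.

Lemma loc_ideal_in I x : I x -> loc_ideal I x.
Proof. by move=> Ix; exists x, 1; do !split => //; [exact: subring1|rewrite divr1]. Qed.

Lemma localization_in x : R x -> localization R M x.
Proof. exact: (@loc_ideal_in R). Qed.

Lemma loc_ideal_ideal I : ideal R I -> ideal (localization R M) (loc_ideal I).
Proof.
move=> hI; split.
  by move=> _ [c [s [Ic [Rs [Ms ->]]]]]; exists c, s; do !split => //; apply: ideal_sub hI Ic.
split; first exact/loc_ideal_in/(ideal0 hI).
split=> x y [a [s [Ia [Rs [Ms ->]]]]] [b [t [Ib [Rt [Mt ->]]]]].
- exists (a * t + b * s), (s * t); do !split; [|exact: subringM|exact: Mmul|].
  + by apply: (idealD hI); apply: (idealMr hI).
  + by rewrite addf_div ?nzM.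
- exists (a * b), (s * t); do !split; [exact: (idealM hI)|exact: subringM|exact: Mmul|].
  exact: mulf_div.
Qed.

Lemma loc_ideal_proper I : ksubset I M -> ~ loc_ideal I 1.
Proof.
move=> sIM [c [s [Ic [Rs [Ms e]]]]].
have cs : c = s by rewrite -(divfK (nzM Ms) c) -e mul1r.
by apply: Ms; rewrite -cs; apply: sIM.
Qed.
End Localization.

Definition polyR (K : fieldType) (R : kset K) (p : {poly K}) := forall i, R p`_i.
Definition adj (K : fieldType) (R : kset K) (y : K) : kset K :=
  fun x => exists p, polyR R p /\ x = p.[y].

Section Adjunction.
Variable K : fieldType.
Implicit Types (R I : kset K) (p q : {poly K}).

Lemma polyR_C R c : R 0 -> R c -> polyR R c%:P.
Proof. by move=> R0 Rc i; rewrite coefC; case: eqP. Qed.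

Lemma polyR_B R p q : is_subring R -> polyR R p -> polyR R q -> polyR R (p - q).
Proof. by move=> hR hp hq i; rewrite coefB; apply: subringB. Qed.

Lemma polyR_M R p q : is_subring R -> polyR R p -> polyR R q -> polyR R (p * q).
Proof. by move=> hR hp hq i; rewrite coefM; apply: subring_sum => // j _; apply: subringM. Qed.

Lemma polyI_D R I p q : ideal R I -> polyR I p -> polyR I q -> polyR I (p + q).
Proof. by move=> hI hp hq i; rewrite coefD; apply: (idealD hI). Qed.

Lemma polyI_M R I p q : ideal R I -> polyR R p -> polyR I q -> polyR I (p * q).
Proof. by move=> hI hp hq i; rewrite coefM; apply: (ideal_sum hI) => j _; apply: (idealM hI). Qed.

Lemma adj_subring R y : is_subring R -> is_subring (adj R y).
Proof.
move=> hR; have [R0 R1] := (subring0 hR, subring1 hR).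
split; first by exists 0; split; [exact: polyR_C|rewrite horner0].
split; first by exists 1; split; [exact: polyR_C|rewrite hornerC].
split=> x z [p [hp ->]] [q [hq ->]].
- by exists (p - q); split; [exact: polyR_B|rewrite hornerD hornerN].
- by exists (p * q); split; [exact: polyR_M|rewrite hornerM].
Qed.

Lemma adj_in R y x : R 0 -> R x -> adj R y x.
Proof. by move=> R0 Rx; exists x%:P; split; [exact: polyR_C|rewrite hornerC]. Qed.

Lemma adj_gen R y : is_subring R -> adj R y y.
Proof.
move=> hR; exists 'X; split; last by rewrite hornerX.
by move=> i; rewrite coefX; case: eqP => _; [exact: subring1|exact: subring0].
Qed.

Lemma adj_ideal R I y : is_subring R -> ideal R I -> ideal (adj R y) (adj I y).
Proof.
move=> hR hI; split.
  by move=> x [p [hp ->]]; exists p; split => // i; exact: ideal_sub hI (hp i).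
split; first exact/adj_in/(ideal0 hI)/(ideal0 hI).
split=> x z [p [hp ->]] [q [hq ->]].
- by exists (p + q); split; [exact: polyI_D hI hp hq|rewrite hornerD].
- by exists (p * q); split; [exact: polyI_M hI hp hq|rewrite hornerM].
Qed.
End Adjunction.

(* For q with q(1/y) = 1 and k >= deg q, the polynomial
   rev_rel q k = X^k q(1/X) - X^k has y as a root; its coefficient of degree k
   is q_0 - 1 and it has degree at most k. *)
Section ReversedPolynomial.
Variable K : fieldType.
Implicit Types (q : {poly K}) (k : nat).

Definition rev_rel q k : {poly K} := \poly_(i < k.+1) q`_(k - i) - 'X^k.

Lemma rev_horner q k y : y != 0 -> (size q <= k.+1)%N ->
  (\poly_(i < k.+1) q`_(k - i)).[y] = y ^+ k * q.[y^-1].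
Proof.
move=> y0 sq; rewrite horner_poly (horner_coef_wide _ sq) mulr_sumr.
rewrite (reindex_inj rev_ord_inj) /=; apply: eq_bigr => i _.
have hi : (i <= k)%N by rewrite -ltnS.
rewrite subSS subKn // exprVn mulrCA; congr (_ * _).
have -> : y ^+ k = y ^+ (k - i) * y ^+ i by rewrite -exprD subnK.
by rewrite mulfK // expf_neq0.
Qed.

Lemma rev_rel_root q k y : y != 0 -> (size q <= k.+1)%N -> q.[y^-1] = 1 ->
  (rev_rel q k).[y] = 0.
Proof. by move=> y0 sq qy; rewrite hornerD hornerN rev_horner // qy mulr1 hornerXn subrr. Qed.

Lemma rev_rel_top q k : (rev_rel q k)`_k = q`_0 - 1.
Proof. by rewrite coefB coef_poly ltnSn subnn coefXn eqxx. Qed.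

Lemma rev_rel_high q k i : (k < i)%N -> (rev_rel q k)`_i = 0.
Proof. by move=> ki; rewrite coefB coef_poly coefXn ltnNge ki gtn_eqF // subr0. Qed.

Lemma rev_rel_polyR (B : kset K) q k : is_subring B -> polyR B q -> polyR B (rev_rel q k).
Proof.
move=> hB hq; apply: polyR_B => // i; last first.
  by rewrite coefXn; case: eqP => _; [exact: subring1|exact: subring0].
by rewrite coef_poly; case: ifP => _; [exact: hq|exact: subring0].
Qed.
End ReversedPolynomial.

Section NoUnitPair.
Variables (K : fieldType) (B m : kset K).
Hypotheses (hB : is_subring B) (hm : ideal B m) (m1 : ~ m 1)
  (loc : forall b, B b -> ~ m b -> B b^-1).

(* If 1 = p(y) = q(1/y) with coefficients in m and size q <= size p, then the
   top coefficient of p can be cancelled by a multiple of rev_rel q, since its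
   top coefficient q_0 - 1 is a unit of B. *)
Lemma reduce y p q : y != 0 -> polyR m p -> polyR m q -> p.[y] = 1 -> q.[y^-1] = 1 ->
  (size q <= size p)%N -> exists2 p', polyR m p' & p'.[y] = 1 /\ (size p' < size p)%N.
Proof.
move=> y0 hp hq py qy sqp.
have q0 : q != 0 by apply: contra_eq_neq qy => ->; rewrite horner0 eq_sym oner_neq0.
set k := (size q).-1; set n := (size p).-1.
have hk : size q = k.+1 by rewrite /k prednK // size_poly_gt0.
have hn : size p = n.+1 by rewrite /n prednK // (leq_trans _ sqp) // hk.
have kn : (k <= n)%N by rewrite -ltnS -hk -hn.
set c := q`_0 - 1; set r := rev_rel q k.
have cm : ~ m c.
  move=> mc; apply: m1; have -> : 1 = q`_0 - c by rewrite /c opprB addrCA subrr addr0.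
  exact: (idealB hB hm).
have c0 : c != 0 by apply/eqP => c0; apply: cm; rewrite c0; apply: ideal0 hm.
have Bc : B c by apply: subringB => //; [exact: ideal_sub hm (hq 0%N)|exact: subring1].
set a := p`_n / c.
have ma : m a by apply: (idealMr hm) => //; apply: loc.
exists (p - a *: ('X^(n - k) * r)); last split.
- move=> i; rewrite coefB coefZ coefXnM; apply: (idealB hB hm) => //.
  case: ifP => _; first by rewrite mulr0; apply: ideal0 hm.
  by apply: (idealMr hm) => //; apply: (rev_rel_polyR _ hB) => j; apply: ideal_sub hm (hq j).
- by rewrite hornerD hornerN hornerZ hornerM rev_rel_root ?hk // !mulr0 subr0.
- rewrite hn ltnS; apply/leq_sizeP => j hj.
  rewrite coefB coefZ coefXnM ltnNge (leq_trans (leq_subr _ _) hj) /=.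
  move: hj; rewrite leq_eqVlt => /orP [/eqP <-|hj].
  + by rewrite subKn // rev_rel_top divfK // subrr.
  + have -> : p`_j = 0 by apply/(leq_sizeP _ (size p)) => //; rewrite hn.
    by rewrite rev_rel_high ?mulr0 ?subrr // ltn_subRL subnK.
Qed.

Lemma no_unit_pair y : y != 0 -> adj m y 1 -> adj m y^-1 1 -> False.
Proof.
move=> y0 [p [hp /esym py]] [q [hq /esym qy]].
move: {2}(size p + size q)%N (leqnn (size p + size q)) => N.
elim: N => [|N IH] in p q hp hq py qy *.
  rewrite leqn0 addn_eq0 size_poly_eq0 => /andP [/eqP p0 _].
  by move: py; rewrite p0 horner0 => /eqP; rewrite eq_sym oner_eq0.
case: (leqP (size q) (size p)) => [sqp|spq] hs.
- have [p' hp' [py' sp']] := reduce y0 hp hq py qy sqp.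
  by apply: (IH p' q) => //; rewrite -ltnS (leq_trans _ hs) // ltn_add2r.
- have qy' : p.[y^-1^-1] = 1 by rewrite invrK.
  have [q' hq' [qy'' sq']] := reduce (invr_neq0 y0) hq hp qy qy' (ltnW spq).
  by apply: (IH p q') => //; rewrite -ltnS (leq_trans _ hs) // ltn_add2l.
Qed.
End NoUnitPair.

Section ChainUnion.
Variables (K : fieldType) (X : Type) (le : X -> X -> Prop) (C : X -> Prop).
Variables (R I : X -> kset K).
Hypotheses (chain : forall p q, C p -> C q -> le p q \/ le q p)
  (Rmono : forall p q, le p q -> ksubset (R p) (R q))
  (Imono : forall p q, le p q -> ksubset (I p) (I q)).

Definition bigU (F : X -> kset K) : kset K := fun x => exists2 p, C p & F p x.

Lemma bigU_common (F G : X -> kset K) x y :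
  (forall p q, le p q -> ksubset (F p) (F q)) -> (forall p q, le p q -> ksubset (G p) (G q)) ->
  bigU F x -> bigU G y -> exists2 r, C r & F r x /\ G r y.
Proof.
move=> Fmono Gmono [p Cp px] [q Cq qy]; case: (chain Cp Cq) => [pq|qp].
- by exists q => //; split => //; apply: Fmono pq _ px.
- by exists p => //; split => //; apply: Gmono qp _ qy.
Qed.

Lemma bigU_finite (F : X -> kset K) (s : seq K) :
  (forall p q, le p q -> ksubset (F p) (F q)) -> (exists p, C p) ->
  (forall x, x \in s -> bigU F x) -> exists2 r, C r & forall x, x \in s -> F r x.
Proof.
move=> Fmono [p0 Cp0]; elim: s => [|x s IH] sU; first by exists p0.
have [|q Cq sq] := IH; first by move=> y ys; apply: sU; rewrite inE ys orbT.
have [p Cp px] := sU x (mem_head x s).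
case: (chain Cp Cq) => [pq|qp]; [exists q|exists p] => // y; rewrite inE => /orP [/eqP ->|ys].
- exact: Fmono pq _ px.
- exact: sq.
- exact: px.
- exact: Fmono qp _ (sq y ys).
Qed.

Lemma bigU_subring : (exists p, C p) -> (forall p, C p -> is_subring (R p)) ->
  is_subring (bigU R).
Proof.
move=> [p0 Cp0] hR.
split; first by exists p0 => //; apply: subring0 (hR _ Cp0).
split; first by exists p0 => //; apply: subring1 (hR _ Cp0).
split=> x y hx hy; have [r Cr [rx ry]] := bigU_common Rmono Rmono hx hy.
- by exists r => //; apply: subringB (hR r Cr) rx ry.
- by exists r => //; apply: subringM (hR r Cr) rx ry.
Qed.

Lemma bigU_ideal : (exists p, C p) -> (forall p, C p -> ideal (R p) (I p)) ->
  ideal (bigU R) (bigU I).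
Proof.
move=> [p0 Cp0] hI.
split; first by move=> x [p Cp px]; exists p => //; apply: ideal_sub (hI p Cp) px.
split; first by exists p0 => //; apply: ideal0 (hI p0 Cp0).
split=> x y hx hy.
- have [r Cr [rx ry]] := bigU_common Imono Imono hx hy.
  by exists r => //; apply: idealD (hI r Cr) rx ry.
- have [r Cr [rx ry]] := bigU_common Rmono Imono hx hy.
  by exists r => //; apply: idealM (hI r Cr) rx ry.
Qed.
End ChainUnion.

Definition centered (K : fieldType) (V T P : kset K) :=
  forall x, T x -> (max_ideal V x <-> P x).

(* The valuation ring is the
   first component of a maximal "dominating pair" (B, m). *)
Section Chevalley.
Variables (K : fieldType) (A Q : kset K).
Hypotheses (hA : is_subring A) (hQ : prime_ideal A Q).

Let Q0 : Q 0. Proof. by case: hQ => _ []. Qed.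
Let Q1 : ~ Q 1. Proof. by case: hQ => _ [_ [_ [_ []]]]. Qed.
Let Qmul s s' : A s -> A s' -> ~ Q s -> ~ Q s' -> ~ Q (s * s').
Proof. by case: hQ => _ [_ [_ [_ [_ h]]]] As As' Qs Qs' /h [] // => /(_ As As'). Qed.
Let hQI : ideal A Q. Proof. exact: prime_ideal_ideal. Qed.

Definition dominating (p : kset K * kset K) := is_subring p.1 /\
  ksubset (localization A Q) p.1 /\ ideal p.1 p.2 /\ ~ p.2 1 /\ ksubset Q p.2.
Definition dom_le (p p' : kset K * kset K) := ksubset p.1 p'.1 /\ ksubset p.2 p'.2.

Lemma dominating_base : dominating (localization A Q, loc_ideal A Q Q).
Proof.
split; first exact: (localization_subring hA Q0 Q1 Qmul).
split=> //; split; first exact: (loc_ideal_ideal hA Q0 Q1 Qmul hQI).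
by split; [apply: (loc_ideal_proper Q0)|move=> x; apply: (loc_ideal_in hA Q1)].
Qed.

Lemma dominating_chain (Ch : kset K * kset K -> Prop) : (forall p, Ch p -> dominating p) ->
  (forall p q, Ch p -> Ch q -> dom_le p q \/ dom_le q p) ->
  exists2 u, dominating u & forall p, Ch p -> dom_le p u.
Proof.
move=> Cdom chain; have [[p0 Cp0]|nC] := pselect (exists p, Ch p); last first.
  exists (localization A Q, loc_ideal A Q Q); first exact: dominating_base.
  by move=> p Cp; case: nC; exists p.
have Rmono p q : dom_le p q -> ksubset p.1 q.1 by case.
have Imono p q : dom_le p q -> ksubset p.2 q.2 by case.
have [_ [sL [_ [_ sQI]]]] := Cdom p0 Cp0.
exists (bigU Ch fst, bigU Ch snd); last by move=> p Cp; split=> x px; exists p.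
split; first by apply: (bigU_subring chain Rmono); [exists p0|move=> p /Cdom []].
split; first by move=> x /sL; exists p0.
split; first by apply: (bigU_ideal chain Rmono Imono); [exists p0|move=> p /Cdom [_ [_ []]]].
split; first by move=> [p /Cdom [_ [_ [_ [p1 _]]]]].
by move=> x /sQI; exists p0.
Qed.

Section MaximalPair.
Variables (B m : kset K).
Hypotheses (hdom : dominating (B, m))
  (hmax : forall p, dominating p -> dom_le (B, m) p -> dom_le p (B, m)).
Let hB : is_subring B. Proof. by case: hdom. Qed.
Let sLB : ksubset (localization A Q) B. Proof. by case: hdom => _ []. Qed.
Let hm : ideal B m. Proof. by case: hdom => _ [_ []]. Qed.
Let m1 : ~ m 1. Proof. by case: hdom => _ [_ [_ []]]. Qed.
Let sQm : ksubset Q m. Proof. by case: hdom => _ [_ [_ []]]. Qed.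

Lemma maxpair_comaximal x : B x -> ~ m x -> add_principal B m x 1.
Proof.
move=> Bx mx; apply: contrapT => m'1.
have hdom' : dominating (B, add_principal B m x).
  split=> //; split=> //; split; first exact: add_principal_ideal.
  by split=> // z /sQm; apply: add_principal_sub.
have [_ /= sm'm] := hmax hdom' (conj (fun z (Bz : B z) => Bz) (@add_principal_sub _ B m x hB)).
exact/mx/sm'm/add_principal_gen.
Qed.

Lemma maxpair_mulclosed s s' : B s -> B s' -> ~ m s -> ~ m s' -> ~ m (s * s').
Proof.
move=> Bs Bs' ms ms' mss'; apply: m1.
have [b [c [Bb [mc e]]]] := maxpair_comaximal Bs ms.
have [b' [c' [Bb' [mc' e']]]] := maxpair_comaximal Bs' ms'.
have -> : 1 = c * (c' + s' * b') + (s * b) * c' + (s * s') * (b * b').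
  by rewrite -[LHS]mul1r {1}e {1}e' mulrDl [X in _ + X]mulrDr mulrACA addrA.
apply: (idealD hm); first apply: (idealD hm).
- by apply: (idealMr hm) => //; rewrite -e'; apply: subring1.
- by apply: (idealM hm) => //; apply: subringM.
- by apply: (idealMr hm) => //; apply: subringM.
Qed.

(* B is local with maximal ideal m: (B_m, m B_m) dominates (B, m). *)
Lemma maxpair_local b : B b -> ~ m b -> B b^-1.
Proof.
move=> Bb mb; have m0 := ideal0 hm.
have hdom' : dominating (localization B m, loc_ideal B m m).
  split; first exact: (localization_subring hB m0 m1 maxpair_mulclosed).
  split; first by move=> z /sLB; apply: localization_in.
  split; first exact: (loc_ideal_ideal hB m0 m1 maxpair_mulclosed hm).
  by split; [apply: loc_ideal_proper|move=> z /sQm; apply: loc_ideal_in].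
have [/= sLmB _] := hmax hdom' (conj (localization_in hB m1) (@loc_ideal_in _ _ _ hB m1 m)).
by apply: sLmB; exists 1, b; do !split => //; [exact: subring1|rewrite div1r].
Qed.

(* For y outside B, 1 lies in m[y]: otherwise (B[y], m[y]) dominates (B, m). *)
Lemma maxpair_adj y : ~ B y -> adj m y 1.
Proof.
move=> nBy; apply: contrapT => nm1; have m0 := ideal0 hm.
have hdom' : dominating (adj B y, adj m y).
  split; first exact: adj_subring.
  split; first by move=> z /sLB; apply: adj_in; apply: subring0.
  split; first exact: adj_ideal.
  by split=> // z /sQm; apply: adj_in.
have le : dom_le (B, m) (adj B y, adj m y).
  by split=> z hz; apply: adj_in => //; apply: subring0.
by have [/= sB _] := hmax hdom' le; apply/nBy/sB/adj_gen.
Qed.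

Lemma maxpair_vring : vring B.
Proof.
split=> // x x0; apply: contrapT => /not_orP [nx nxi].
exact: (no_unit_pair hB hm m1 maxpair_local x0) (maxpair_adj nx) (maxpair_adj nxi).
Qed.

Lemma maxpair_center : centered B A Q.
Proof.
move=> x Ax; split=> [[Bx nxi]|Qx].
- apply: contrapT => nQx; have x0 : x != 0 by apply/eqP => x0; apply: nQx; rewrite x0.
  by apply: (nxi x0); apply: sLB; exists 1, x; do !split => //; [exact: subring1|rewrite div1r].
- have mx := sQm Qx; split; first exact: ideal_sub hm mx.
  by move=> x0 Bxi; apply: ideal_unit hm m1 x0 Bxi mx.
Qed.
End MaximalPair.

Theorem chevalley : exists2 W, vring W & ksubset A W /\ centered W A Q.
Proof.
have dom_refl p : dom_le p p by split.
have dom_trans p q r : dom_le p q -> dom_le q r -> dom_le p r.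
  by move=> [pq1 pq2] [qr1 qr2]; split=> x h; [apply/qr1/pq1|apply/qr2/pq2].
have [[B m] hdom hmax] := zorn_in dom_refl dom_trans dominating_chain.
exists B; first exact: maxpair_vring hdom hmax.
split; last exact: maxpair_center hdom.
by move=> a Aa; case: hdom => _ [sLB _]; apply/sLB/localization_in.
Qed.
End Chevalley.

(* It is
   obtained from Chevalley's theorem for the ring T + m_U and its prime
   P' + m_U, where m_U is the maximal ideal of U. *)
Section Refine.
Variables (K : fieldType) (T U P P' : kset K).
Hypotheses (hT : is_subring T) (hU : vring U) (sTU : ksubset T U)
  (cU : centered U T P) (hP' : prime_ideal T P') (sPP : ksubset P P').

Let hUs : is_subring U. Proof. by case: hU. Qed.
Let hmU : ideal U (max_ideal U). Proof. exact: max_ideal_ideal. Qed.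
Let hP'I : ideal T P'. Proof. exact: prime_ideal_ideal. Qed.
Let TmP' z : T z -> max_ideal U z -> P' z. Proof. by move=> Tz mz; apply/sPP/cU. Qed.

Definition plus_max (S : kset K) : kset K :=
  fun x => exists s z, S s /\ max_ideal U z /\ x = s + z.

Lemma plus_maxP (S : kset K) s z : S s -> max_ideal U z -> plus_max S (s + z).
Proof. by move=> Ss mz; exists s, z. Qed.

Lemma plus_max_in (S : kset K) s : S s -> plus_max S s.
Proof. by move=> Ss; rewrite -[s]addr0; apply: plus_maxP (ideal0 hmU). Qed.

Lemma plus_max_mul t z t' z' : T t -> T t' -> max_ideal U z -> max_ideal U z' ->
  exists2 w, max_ideal U w & (t + z) * (t' + z') = t * t' + w.
Proof.
move=> Tt Tt' mz mz'; exists (t * z' + (z * t' + z * z')).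
  apply: (idealD hmU); first by apply: (idealM hmU) => //; apply: sTU.
  apply: (idealD hmU); first by apply: (idealMr hmU) => //; apply: sTU.
  by apply: (idealM hmU) => //; apply: ideal_sub hmU mz.
by rewrite mulrDl !mulrDr !addrA.
Qed.

Lemma plus_max_subring : is_subring (plus_max T).
Proof.
split; first exact: plus_max_in (subring0 hT).
split; first exact: plus_max_in (subring1 hT).
split=> _ _ [t [z [Tt [mz ->]]]] [t' [z' [Tt' [mz' ->]]]].
- by rewrite opprD addrACA; apply: plus_maxP; [apply: subringB|apply: (idealB hUs hmU)].
- have [w mw ->] := plus_max_mul Tt Tt' mz mz'.
  by apply: plus_maxP mw; apply: subringM.
Qed.

Lemma plus_max_prime : prime_ideal (plus_max T) (plus_max P').
Proof.
split; first by move=> _ [p [z [Pp [mz ->]]]]; apply: plus_maxP mz; apply: ideal_sub hP'I Pp.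
split; first exact: plus_max_in (ideal0 hP'I).
split.
  move=> _ _ [p [z [Pp [mz ->]]]] [p' [z' [Pp' [mz' ->]]]].
  by rewrite addrACA; apply: plus_maxP; [apply: (idealD hP'I)|apply: (idealD hmU)].
split.
  move=> _ _ [t [z [Tt [mz ->]]]] [p [z' [Pp [mz' ->]]]].
  have [w mw ->] := plus_max_mul Tt (ideal_sub hP'I Pp) mz mz'.
  by apply: plus_maxP mw; apply: (idealM hP'I).
split.
  (* 1 = p + z forces z = 1 - p into T, hence into P', and then 1 into P' *)
  move=> [p [z [Pp [mz e]]]]; have Tp := ideal_sub hP'I Pp.
  have Tz : T z.
    by rewrite (_ : z = 1 - p); [apply: subringB (subring1 hT) Tp|rewrite e addrC addKr].
  case: hP' => _ [_ [_ [_ [P'1 _]]]]; apply: P'1.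
  by rewrite e; apply: (idealD hP'I) => //; apply: TmP'.
move=> _ _ [t [z [Tt [mz ->]]]] [t' [z' [Tt' [mz' ->]]]] [p [w0 [Pp [mw0 e]]]].
have [w mw ett'] := plus_max_mul Tt Tt' mz mz'.
(* t t' - p = w0 - w lies in T and in m_U, hence in P', so t t' lies in P' *)
have Tp := ideal_sub hP'I Pp.
have d : t * t' - p = w0 - w by rewrite -(addrK w (t * t')) -ett' e addrAC [p + w0]addrC addrK.
have Ptt' : P' (t * t').
  rewrite -[t * t'](subrK p); apply: (idealD hP'I) => //; apply: TmP'.
    by apply: subringB => //; apply: subringM.
  by rewrite d; apply: (idealB hUs hmU).
case: hP' => _ [_ [_ [_ [_ P'prime]]]].
by case: (P'prime _ _ Tt Tt' Ptt') => Px; [left|right]; apply: plus_maxP.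
Qed.

Theorem valuation_refine : exists2 W, vring W & ksubset T W /\ ksubset W U /\ centered W T P'.
Proof.
have [W hW [sAW cW]] := chevalley plus_max_subring plus_max_prime.
have sTW : ksubset T W by move=> t /plus_max_in /sAW.
exists W => //; split => //; split.
- (* an x in W \ U would have x^-1 in m_U, hence in the center P' + m_U of W *)
  move=> x Wx; apply: contrapT => nUx; have mxi := vring_out hU nUx.
  have x0 : x != 0 by apply/eqP => x0; apply: nUx; rewrite x0; apply: subring0.
  have Axi : plus_max T x^-1 by rewrite -[x^-1]add0r; apply: plus_maxP mxi; apply: subring0.
  have [_ nWx] : max_ideal W x^-1.
    by apply/(cW _ Axi); rewrite -[x^-1]add0r; apply: plus_maxP mxi; apply: ideal0 hP'I.
  by apply: nWx; rewrite ?invr_eq0 ?invrK.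
- move=> x Tx; rewrite (cW x (plus_max_in Tx)); split; last exact: plus_max_in.
  move=> [p [z [Pp [mz e]]]]; have Tp := ideal_sub hP'I Pp.
  have Tz : T z by rewrite (_ : z = x - p); [apply: subringB|rewrite e addrAC subrr add0r].
  by rewrite e; apply: (idealD hP'I) => //; apply: TmP'.
Qed.
End Refine.

Lemma valuation_chain (K : fieldType) (T : kset K) (c : nat -> kset K) n : is_subring T ->
  (forall i, (i <= n)%N -> prime_ideal T (c i)) ->
  (forall i, (i < n)%N -> ksubset (c i) (c i.+1)) ->
  forall k, (k <= n)%N -> exists2 u : nat -> kset K,
    (forall i, (i <= k)%N -> vring (u i) /\ ksubset T (u i) /\ centered (u i) T (c i)) &
    (forall i j, (i <= j <= k)%N -> ksubset (u j) (u i)).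
Proof.
move=> hT hc hs; elim=> [|k IH] kn.
  have [W hW sTW] := chevalley hT (hc 0%N kn).
  by exists (fun=> W) => [i|i j _]; [rewrite leqn0 => /eqP ->|].
have [u hu hsub] := IH (ltnW kn); have [hUk [sTUk cUk]] := hu k (leqnn k).
have [W hW [sTW [sWU cW]]] := valuation_refine hT hUk sTUk cUk (hc k.+1 kn) (hs k kn).
pose u' i := if (i <= k)%N then u i else W.
exists u' => [i ik1|i j /andP [ij jk1]]; rewrite /u'.
- case: leqP => [ik|ki]; first exact: hu.
  by have -> : i = k.+1 by apply/eqP; rewrite eqn_leq ik1 ki.
- case: (leqP j k) => [jk|kj]; first by rewrite (leq_trans ij jk); apply: hsub; rewrite ij.
  by case: (leqP i k) => [ik|_] // x /sWU; apply: hsub; rewrite ik leqnn.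
Qed.

(* Hence a chain of n + 1 primes in T yields a valuation ring containing T of
   dimension at least n: the maximal ideals of the u i form such a chain. *)
Theorem valuation_dim_ge (K : fieldType) (T : kset K) n : is_subring T -> dim_ge T n ->
  exists2 V, vring V & ksubset T V /\ dim_ge V n.
Proof.
move=> hT [c [hc hs]].
have [u hu hsub] := valuation_chain hT hc (fun i h => (hs i h).1) (leqnn n).
have [hV [sTV _]] := hu n (leqnn n).
exists (u n) => //; split => //; exists (fun i => max_ideal (u i)); split.
  move=> i ni; have sVi : ksubset (u n) (u i) by apply: hsub; rewrite ni leqnn.
  exact: max_ideal_prime hV (hu i ni).1 sVi.
move=> i ni; have [hUi [_ cUi]] := hu i (ltnW ni); have [hUi' [_ cUi']] := hu i.+1 ni.
have sUi : ksubset (u i.+1) (u i) by apply: hsub; rewrite leqnSn ni.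
split; first exact: max_ideal_anti hUi' sUi.
have [_ [x [cx ncx]]] := hs i ni; have Tx : T x by case: (hc i.+1 ni) => sT _; apply: sT.
by exists x; split; [apply/cUi'|move/(cUi x Tx)].
Qed.

Section FinitelyGenerated.
Variables (K : fieldType) (D : kset K).
Hypothesis hD : is_subring D.
Implicit Types (E F : kset K) (s : seq K).

Lemma span_submodule s : is_submodule D (Defs.span D s).
Proof.
elim: s => [|x s [h0 [hadd hmul]]] /=.
  by split=> //; split=> [x y -> ->|d x _ ->]; rewrite ?addr0 ?mulr0.
split; first by exists 0, 0; do !split => //; [exact: subring0|rewrite mul0r addr0].
split=> [_ _ [r [w [Dr [sw ->]]]] [r' [w' [Dr' [sw' ->]]]]|d _ Dd [r [w [Dr [sw ->]]]]].
- exists (r + r'), (w + w'); do !split; [exact: subringD|exact: hadd|].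
  by rewrite mulrDl addrACA.
- exists (d * r), (d * w); do !split; [exact: subringM|exact: hmul|].
  by rewrite mulrDr mulrA.
Qed.

Lemma span_mem s x : x \in s -> Defs.span D s x.
Proof.
elim: s => [|y s IH] //=; rewrite inE => /orP [/eqP ->|xs].
- by exists 1, 0; do !split; [exact: subring1|exact: (span_submodule s).1|rewrite mul1r addr0].
- by exists 0, x; do !split; [exact: subring0|exact: IH|rewrite mul0r add0r].
Qed.

Lemma span_sub s E : is_submodule D E -> (forall x, x \in s -> E x) -> ksubset (Defs.span D s) E.
Proof.
move=> [E0 [Eadd Emul]]; elim: s => [|y s IH] Es z /=; first by move->.
move=> [r [w [Dr [sw ->]]]]; apply: Eadd; first by apply: Emul => //; apply: Es; rewrite mem_head.
by apply: IH sw => x xs; apply: Es; rewrite inE xs orbT.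
Qed.

Lemma fg_span F : fg_frac D F -> exists2 s, F = Defs.span D s & knonzero F.
Proof. by move=> [[s /predeqP ->] nzF]; exists s. Qed.

Lemma fg_Fbar F : fg_frac D F -> Fbar D F.
Proof. by move=> /fg_span [s -> nz]; split => //; apply: span_submodule. Qed.

Lemma span_fg s : knonzero (Defs.span D s) -> fg_frac D (Defs.span D s).
Proof. by split => //; exists s. Qed.

Lemma span_subset s s' : {subset s <= s'} -> ksubset (Defs.span D s) (Defs.span D s').
Proof. by move=> ss'; apply: span_sub; [apply: span_submodule|move=> x /ss'; apply: span_mem]. Qed.

Lemma span_fg_mem s a : a \in s -> a != 0 -> fg_frac D (Defs.span D s).
Proof. by move=> sa a0; apply: span_fg; exists a; split => //; apply: span_mem. Qed.
End FinitelyGenerated.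

Section Semistar.
Variables (K : fieldType) (D : kset K) (star : kset K -> kset K).
Hypotheses (hD : is_subring D) (ss : semistar D star).
Implicit Types (E F G : kset K).

Lemma star_Fbar E : Fbar D E -> Fbar D (star E). Proof. by case: ss => h _; apply: h. Qed.
Lemma star_mono E F : Fbar D E -> Fbar D F -> ksubset E F -> ksubset (star E) (star F).
Proof. by case: ss => _ [_ [h _]]; apply: h. Qed.
Lemma star_ext E : Fbar D E -> ksubset E (star E).
Proof. by case: ss => _ [_ [_ [h _]]]; apply: h. Qed.
Lemma star_idem E : Fbar D E -> ksubset (star (star E)) (star E).
Proof. by case: ss => _ [_ [_ [_ h]]] hE x /(h E hE). Qed.

Lemma star_sub_star E F : Fbar D E -> Fbar D F -> ksubset E (star F) -> ksubset (star E) (star F).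
Proof.
move=> hE hF sEF x /(star_mono hE (star_Fbar hF) sEF); exact: star_idem.
Qed.

Lemma star_eq_self G : Fbar D G -> ksubset G D -> star G 1 -> kseteq (star G) (star D).
Proof.
move=> hG sGD sG1 x; split; first exact: star_mono hG (Fbar_self hD) sGD x.
apply: (star_sub_star (Fbar_self hD) hG) x => d Dd; rewrite -[d]mulr1.
by have [[_ [_ smul]] _] := star_Fbar hG; apply: smul.
Qed.
End Semistar.

Section StarF.
Variables (K : fieldType) (D : kset K) (star : kset K -> kset K).
Hypotheses (hD : is_subring D) (ss : semistar D star).
Implicit Types (E F G : kset K).

Lemma star_f_ext E : Fbar D E -> ksubset E (star_f D star E).
Proof.
move=> [hE [e [Ee e0]]] x Ex; have fF := @span_fg_mem _ _ hD [:: e; x] e (mem_head _ _) e0.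
exists (Defs.span D [:: e; x]); split=> //; split.
  by apply: span_sub => // z; rewrite !inE => /orP [] /eqP ->.
by apply: (star_ext ss (fg_Fbar hD fF)); apply: (span_mem hD); rewrite !inE eqxx orbT.
Qed.

Lemma star_f_cover E (s : seq K) : Fbar D E -> (forall x, x \in s -> star_f D star E x) ->
  exists2 F, fg_frac D F & ksubset F E /\ forall x, x \in s -> star F x.
Proof.
move=> [hE [e [Ee e0]]]; elim: s => [|x s IH] sE.
  exists (Defs.span D [:: e]); first by apply: (span_fg_mem hD _ e0); rewrite mem_head.
  by split=> // z; apply: span_sub => // y; rewrite inE => /eqP ->.
have [F1 [fF1 [sF1E F1x]]] := sE x (mem_head x s).
have [F2 fF2 [sF2E F2s]] :
    exists2 F2, fg_frac D F2 & ksubset F2 E /\ forall y, y \in s -> star F2 y.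
  by apply: IH => y ys; apply: sE; rewrite inE ys orbT.
have [s1 eF1 [a [F1a a0]]] := fg_span fF1; have [s2 eF2 _] := fg_span fF2.
pose F := Defs.span D (s1 ++ s2).
have sF1F : ksubset F1 F by rewrite eF1; apply: (span_subset hD) => y ys; rewrite mem_cat ys.
have sF2F : ksubset F2 F by rewrite eF2; apply: (span_subset hD) => y ys; rewrite mem_cat ys orbT.
have fF : fg_frac D F by apply: span_fg; exists a; split => //; apply: sF1F.
exists F => //; split.
  apply: span_sub => // y; rewrite mem_cat => /orP [] ys.
  - by apply: sF1E; rewrite eF1; apply: (span_mem hD).
  - by apply: sF2E; rewrite eF2; apply: (span_mem hD).
move=> y; rewrite inE => /orP [/eqP ->|ys].
- exact: (star_mono ss (fg_Fbar hD fF1) (fg_Fbar hD fF) sF1F F1x).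
- exact: (star_mono ss (fg_Fbar hD fF2) (fg_Fbar hD fF) sF2F (F2s y ys)).
Qed.

Lemma star_f_submodule E : Fbar D E -> is_submodule D (star_f D star E).
Proof.
move=> hE; have [[E0 _] _] := hE.
split; first exact: star_f_ext.
split=> [x y hx hy|d x Dd [F [fF [sFE Fx]]]].
- have [|F fF [sFE Fxy]] := star_f_cover (s := [:: x; y]) hE.
    by move=> z; rewrite !inE => /orP [] /eqP ->.
  exists F; split=> //; split=> //; have [[_ [Fadd _]] _] := star_Fbar ss (fg_Fbar hD fF).
  by apply: Fadd; apply: Fxy; rewrite !inE eqxx ?orbT.
- exists F; split=> //; split=> //; have [[_ [_ Fmul]] _] := star_Fbar ss (fg_Fbar hD fF).
  exact: Fmul.
Qed.

Lemma star_f_idem E : Fbar D E -> ksubset (star_f D star (star_f D star E)) (star_f D star E).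
Proof.
move=> hE x [G [fG [sGE Gx]]]; have [s eG _] := fg_span fG.
have [F fF [sFE Fs]] : exists2 F, fg_frac D F & ksubset F E /\ forall y, y \in s -> star F y.
  by apply: star_f_cover => // y ys; apply: sGE; rewrite eG; apply: (span_mem hD).
exists F; split=> //; split=> //.
apply: (star_sub_star ss (fg_Fbar hD fG) (fg_Fbar hD fF)) Gx.
by rewrite eG; apply: span_sub => //; have [] := star_Fbar ss (fg_Fbar hD fF).
Qed.
End StarF.

(* Every nonzero ideal I of D with 1 outside I^{star_f} is contained in a
   quasi-star_f-maximal ideal: by Zorn's lemma, take M maximal among the ideals
   containing I whose star_f avoids 1; M is then a quasi-star_f-ideal because
   M + yD still avoids 1 for y in M^{star_f} (star_f is idempotent). *)
Section QMaxExistence.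
Variables (K : fieldType) (D : kset K) (star : kset K -> kset K).
Hypotheses (hD : is_subring D) (ss : semistar D star).
Variable I : kset K.
Hypotheses (hI : ideal D I) (nzI : knonzero I) (I1 : ~ star_f D star I 1).

Definition star_avoiding (N : kset K) := ideal D N /\ ksubset I N /\ ~ star_f D star N 1.

Lemma star_avoiding_chain (C : kset K -> Prop) : (forall N, C N -> star_avoiding N) ->
  (forall N N', C N -> C N' -> ksubset N N' \/ ksubset N' N) ->
  exists2 U, star_avoiding U & forall N, C N -> ksubset N U.
Proof.
move=> Cavoid chain; have [[N0 CN0]|nC] := pselect (exists N, C N); last first.
  by exists I => [|N CN]; [split=> //; split=> // x|case: nC; exists N].
have Dmono (N N' : kset K) : ksubset N N' -> ksubset D D by move=> _ x.
have Imono (N N' : kset K) : ksubset N N' -> ksubset N N' by [].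
have [sUD [U0 [Uadd Umul]]] :=
  bigU_ideal chain Dmono Imono (ex_intro _ N0 CN0) (fun N => fun h => (Cavoid N h).1).
exists (bigU C id); last by move=> N CN x Nx; exists N.
split.
  split; first by move=> x /sUD [].
  by split=> //; split=> // r x Dr; apply: Umul; exists N0.
split; first by move=> x /(Cavoid N0 CN0).2.1 Ix; exists N0.
(* the generators of a f.g. G <= U with 1 in G^star all lie in one member N *)
move=> [G [fG [sGU G1]]]; have [s eG _] := fg_span fG.
have sU x : x \in s -> bigU C id x by move=> xs; apply: sGU; rewrite eG; apply: (span_mem hD).
have [N CN sN] := bigU_finite chain Imono (ex_intro _ N0 CN0) sU.
have [hN [_ N1]] := Cavoid N CN; apply: N1; exists G; split=> //; split=> //.
by rewrite eG; apply: span_sub => //; apply: ideal_submodule hN.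
Qed.

Section Maximal.
Variable M : kset K.
Hypotheses (hM : star_avoiding M) (Mmax : forall N, star_avoiding N -> ksubset M N -> ksubset N M).
Let hMI : ideal D M. Proof. by case: hM. Qed.
Let sIM : ksubset I M. Proof. by case: hM => _ []. Qed.
Let M1 : ~ star_f D star M 1. Proof. by case: hM => _ []. Qed.

Lemma max_avoiding_Fbar : Fbar D M.
Proof.
split; first exact: ideal_submodule.
by have [a [Ia a0]] := nzI; exists a; split=> //; apply: sIM.
Qed.

Lemma max_avoiding_closed y : star_f D star M y -> D y -> M y.
Proof.
move=> My Dy; pose N := add_principal D M y.
have hM' := max_avoiding_Fbar.
have sNM : ksubset N (star_f D star M).
  move=> _ [b [c [Db [Mc ->]]]]; have [_ [Sadd Smul]] := star_f_submodule hD ss hM'.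
  by apply: Sadd; [apply: star_f_ext|rewrite mulrC; apply: Smul].
apply: (Mmax (N := N)) (add_principal_gen y hD hMI); last exact: add_principal_sub.
split; first exact: add_principal_ideal.
split; first by move=> x /sIM; apply: add_principal_sub.
move=> [F [fF [sFN F1]]]; apply: M1; apply: (star_f_idem hD ss hM').
by exists F; split=> //; split=> // x /sFN /sNM.
Qed.

Lemma max_avoiding_QMax : QMax D star M.
Proof.
have hM' := max_avoiding_Fbar.
have quasi : quasi_ideal D star M.
  split; first by split=> // x; apply: ideal_sub hMI.
  move=> x; split=> [[Mx Dx]|Mx]; first exact: max_avoiding_closed.
  by split; [exact: (star_f_ext hD ss hM' Mx)|exact: (ideal_sub hMI Mx)].
split=> //; split.
  by exists 1; split; [apply: subring1|move=> M1'; apply/M1/(star_f_ext hD ss hM')].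
move=> N [[[hN _] sND] quasiN] [d [Dd Nd]] sMN; apply: Mmax => //.
split; first by split.
split; first by move=> x /sIM /sMN.
(* 1 in N^{star_f} would put 1, hence all of D, into the quasi-ideal N *)
move=> N1; apply: Nd; have N1' : N 1 by apply/quasiN; split=> //; apply: subring1.
by rewrite -[d]mulr1; have [_ [_ Nmul]] := hN; apply: Nmul.
Qed.
End Maximal.

Theorem qmax_exists : exists2 M, QMax D star M & ksubset I M.
Proof.
have sub_refl (N : kset K) : ksubset N N by [].
have sub_trans (N1 N2 N3 : kset K) : ksubset N1 N2 -> ksubset N2 N3 -> ksubset N1 N3.
  by move=> s12 s23 x /s12 /s23.
have [M hM Mmax] := zorn_in sub_refl sub_trans star_avoiding_chain.
by exists M; [apply: max_avoiding_QMax|case: hM => _ []].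
Qed.
End QMaxExistence.

Section Linked.
Variables (K : fieldType) (D : kset K) (star : kset K -> kset K).
Hypotheses (hD : is_subring D) (qf : quotient_field_of D) (ss : semistar D star).

(* An ideal F <= D in f(D) with 1 in F^star has 1 in F^{tilde star}: it is not
   contained in any M in QMax, so some f in F is a unit of D_M and 1 = f / f. *)
Lemma star_tilde_one F : fg_frac D F -> ksubset F D -> star F 1 -> star_tilde D star F 1.
Proof.
move=> fF sFD F1 M [[[[[M0 [_ Mmul]] _] sMD] quasiM] [[d [Dd Md]] _]].
have [f Ff Mf] : exists2 f, F f & ~ M f.
  apply: contrapT => nFM; apply: Md; rewrite -[d]mulr1; apply: Mmul => //.
  apply/quasiM; split; last exact: subring1.
  by exists F; split=> //; split=> // x Fx; apply: contrapT => Mx; apply: nFM; exists x.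
have f0 : f != 0 by apply/eqP => f0; apply: Mf; rewrite f0.
rewrite -(mulfV f0); apply: ext_single => //.
by exists 1, f; do !split => //; [exact: subring1|exact: sFD|rewrite div1r].
Qed.

Theorem tilde_linked V : tilde_valuation_overring D star V -> linked D star V.
Proof.
move=> [[[hV sDV] _] tV]; split=> [//|F fF sFD eF x].
have F1 : star F 1 by apply/eF; apply: (star_ext ss (Fbar_self hD)); apply: subring1.
have FV1 := tV F fF 1 (star_tilde_one fF sFD F1).
split; first by apply: ext_subring => // y /sFD /sDV.
by move=> Vx; rewrite -[x]mul1r; apply: ext_mulr FV1 => t Vt; apply: subringM.
Qed.

(* The center P = m_V /\ D of V on D has 1 outside its
   star_f (linkedness), so either P = 0 and V = K, or P lies in some M in QMax and
   then D_M <= V. *)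
Section ValuationOverLinked.
Variables (T V : kset K).
Hypotheses (hT : linked D star T) (hV : vring V) (sTV : ksubset T V).
Let sDV : ksubset D V. Proof. by case: hT => [[_ sDT] _] x /sDT /sTV. Qed.
Let hmV : ideal V (max_ideal V). Proof. exact: max_ideal_ideal. Qed.

Definition center_D : kset K := fun x => max_ideal V x /\ D x.

Lemma center_D_ideal : ideal D center_D.
Proof.
split; first by move=> x [].
split; first by split; [exact: ideal0 hmV|exact: subring0].
split=> [x y [mx Dx] [my Dy]|r x Dr [mx Dx]].
- by split; [apply: (idealD hmV)|apply: subringD].
- by split; [apply: (idealM hmV) => //; apply: sDV|apply: subringM].
Qed.

(* A f.g. G <= P with G^star = D^star would give G T = T <= m_V. *)
Lemma center_D_avoids : ~ star_f D star center_D 1.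
Proof.
move=> [G [fG [sGP G1]]]; have sGD : ksubset G D by move=> x /sGP [].
have eG := star_eq_self hD ss (fg_Fbar hD fG) sGD G1.
have [[hTs _] lT] := hT; have GT1 : ext G T 1 by apply/(lT G fG sGD eG); apply: subring1.
by apply: (max_ideal1 hV.1); apply: ext_ideal hmV _ sTV _ GT1 => x /sGP [].
Qed.

(* If P = 0 then V = K: for z outside V, z^-1 in m_V and a nonzero multiple of
   z^-1 lies in D. *)
Lemma center_D_zero : ~ knonzero center_D -> forall z, V z.
Proof.
move=> nzP z; apply: contrapT => nVz; have mzi := vring_out hV nVz.
have [a [b [Da [Db [b0 ezi]]]]] := qf z^-1.
have z0 : z != 0 by apply/eqP => z0; apply: nVz; rewrite z0; apply: subring0 hV.1.
apply: nzP; exists a; split; last by rewrite -(divfK b0 a) -ezi mulf_neq0 ?invr_eq0.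
by split => //; rewrite -(divfK b0 a) -ezi; apply: (idealMr hmV) => //; apply: sDV.
Qed.

Lemma localization_in_V M : ksubset center_D M -> ksubset (localization D M) V.
Proof.
move=> sPM _ [d [s [Dd [Ds [Ms ->]]]]].
have [_ Vsi] : s != 0 /\ V s^-1 by apply: vring_unit (sDV Ds) _ => ms; apply/Ms/sPM.
exact: subringM hV.1 (sDV Dd) Vsi.
Qed.

Theorem valuation_over_linked F : fg_frac D F -> ksubset (star_tilde D star F) (ext F V).
Proof.
move=> fF x Fx; have [nzP|zP] := pselect (knonzero center_D).
  have [M QM sPM] := qmax_exists hD ss center_D_ideal nzP center_D_avoids.
  exact: ext_monor (localization_in_V sPM) _ (Fx M QM).
have [_ [f [Ff f0]]] := fg_Fbar hD fF.
by rewrite -[x](mulVKf f0); apply: ext_single => //; apply: center_D_zero.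
Qed.
End ValuationOverLinked.
End Linked.

Theorem corollary4p3 (K : fieldType) (D : kset K) (star : kset K -> kset K) :
  domain_with_qf D -> semistar D star ->
  forall n : nat, tilde_dim_v_ge D star n <-> linked_dim_sup_ge D star n.
Proof.
move=> [hD qf] ss n; split=> [[V [tV dV]]|[T [hT dT]]].
  by exists V; split=> //; apply: tilde_linked.
have [[hTs sDT] _] := hT.
have [V hV [sTV dV]] := valuation_dim_ge hTs dT.
exists V; split=> //; split; last exact: valuation_over_linked hT hV sTV.
by split; [split=> [|x /sDT /sTV]; [exact: hV.1|]|exact: hV.2].
Qed.
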